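(* For an even integer $n>1$ and an integer $m\geq 3$, $$\chi_{ld}(P_{m}[\overline{K_{n}}])\leq \begin{cases}3 &\text{if $m$ is odd,}\\ 4 &\text{if $m$ is even.}\end{cases}$$
   Context: All graphs are finite, simple and undirected. For a graph $G=(V,E)$ of order $N$ without isolated vertices, a bijection $f\colon V\to\{1,2,\dots,N\}$ is a local distance antimagic labeling if $w(u)\neq w(v)$ for every edge $uv$, where $w(u)=\sum_{x\in N(u)}f(x)$ and $N(u)$ is the open neighborhood of $u$. $\chi_{ld}(G)$ is the minimum number of distinct weights over all local distance antimagic labelings of $G$. $P_m$ is the path on $m$ vertices, $\overline{K_n}$ the edgeless graph on $n$ vertices. The lexicographic product $G[H]$ has vertex set $V(G)\times V(H)$, with $(g,h)$ adjacent to $(g',h')$ iff $gg'\in E(G)$, or $g=g'$ and $hh'\in E(H)$. *)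

From mathcomp Require Import all_boot.
Set Implicit Arguments. Unset Strict Implicit. Unset Printing Implicit Defensive.

Definition path_rel (m : nat) : rel 'I_m :=
  fun i j => (i.+1 == j :> nat) || (j.+1 == i :> nat).

Definition edgeless_rel (n : nat) : rel 'I_n := fun _ _ => false.

Definition lexprod (A B : finType) (eG : rel A) (eH : rel B) : rel (A * B) :=
  fun x y => eG x.1 y.1 || ((x.1 == y.1) && eH x.2 y.2).

Section LDA.
Variables (T : finType) (e : rel T).

(* A labeling is a bijection f : V -> {1..N}; encoded as an injective
   f : T -> 'I_#|T| (hence bijective), the label of x being (f x).+1. *)
Definition weight (f : {ffun T -> 'I_#|T|}) (u : T) : nat :=
  \sum_(x | e u x) (f x).+1.

Definition is_lda (f : {ffun T -> 'I_#|T|}) : bool :=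
  injectiveb f && [forall u, forall v, e u v ==> (weight f u != weight f v)].

Definition num_weights (f : {ffun T -> 'I_#|T|}) : nat :=
  size (undup [seq weight f u | u <- enum T]).

(* chi_ld: minimum number of distinct weights over all local distance
   antimagic labelings (default #|T|.+1 if none exists). *)
Definition chi_ld : nat :=
  \big[minn/#|T|.+1]_(f : {ffun T -> 'I_#|T|} | is_lda f) num_weights f.
End LDA.
Arguments path_rel m : clear implicits.
Arguments edgeless_rel n : clear implicits.

From mathcomp Require Import all_boot all_order zify.
Import Order.TTheory.

(* Label the vertex (i, j) of P_m[K_n-bar] (column i of the path, copy j) by
   m j + r_j(i) + 1, each r_j being a permutation of {0, ..., m-1}.  All the
   vertices of column i then have weight M(i-1) + M(i+1), where the mass M(k) is
   the sum of the labels of column k.  The layers j >= 2 come in pairs with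
   r_j(i) + r_(j+1)(i) = m - 1 (n is even), and r_0, r_1 are chosen so that M
   alternates between a on even and b on odd columns, with b - a = m for m odd
   and b - a = 2 for m even.  The weight of column i is thus once or twice the
   mass of the parity opposite to i; as neither of a, b equals or doubles the
   other, adjacent columns get different weights, which all lie in
   {b, 2a, 2b} for m odd (both ends have weight b) and in {a, b, 2a, 2b} for
   m even. *)

Set Implicit Arguments.
Unset Strict Implicit.
Unset Printing Implicit Defensive.

Section Labelings.
Variables (T : finType) (e : rel T).
Implicit Type f : {ffun T -> 'I_#|T|}.

Lemma is_ldaP f :
  reflect (injective f /\ forall u v, e u v -> weight e f u != weight e f v) (is_lda e f).
Proof.
apply: (iffP andP) => [[/injectiveP f_inj /'forall_forallP proper]|[f_inj proper]].
  by split=> // u v; apply/implyP.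
split; first exact/injectiveP.
by apply/'forall_forallP => u v; apply/implyP/proper.
Qed.

Lemma chi_ld_le_num_weights f : is_lda e f -> chi_ld e <= num_weights e f.
Proof. by move=> f_lda; have := bigmin_le_cond #|T|.+1 (num_weights e) f_lda; rewrite minEnat. Qed.

Lemma num_weights_le_size f (s : seq nat) :
  (forall u, weight e f u \in s) -> num_weights e f <= size s.
Proof.
move=> weight_in_s; apply: uniq_leq_size (undup_uniq _) _ => w.
by rewrite mem_undup => /mapP[u _ ->].
Qed.

End Labelings.

Lemma weight_lexprod_edgeless (A : finType) (eG : rel A) n
    (f : {ffun A * 'I_n -> 'I_#|{: A * 'I_n}|}) (u : A * 'I_n) :
  weight (lexprod eG (edgeless_rel n)) f u = \sum_(x | eG u.1 x) \sum_(j < n) (f (x, j)).+1.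
Proof.
rewrite pair_big /weight; apply: eq_big => [x|[x j] _] //.
by rewrite /lexprod /edgeless_rel andbF orbF andbT.
Qed.

Lemma path_nbr_sum m (i : 'I_m) (F : nat -> nat) :
  \sum_(k < m | path_rel m i k) F k =
    (if i.+1 < m then F i.+1 else 0) + (if 0 < i then F i.-1 else 0).
Proof.
rewrite (bigID (fun k : 'I_m => i.+1 == k)) /=; congr (_ + _).
  by rewrite -(big_ord1_eq addn); apply: eq_bigl => k; rewrite /path_rel; lia.
rewrite (eq_bigl (fun k : 'I_m => (0 < i) && (k == i.-1 :> nat))) => [|k]; last first.
  by rewrite /path_rel; lia.
by rewrite (big_ord1_cond_eq _ _ (fun=> 0 < i)) (leq_ltn_trans (leq_pred i) (ltn_ord i)).
Qed.

Section AlternatingMasses.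
Variables (m a b : nat).

Definition path_alt_weight (i : nat) := (if odd i then a else b) * ((i.+1 < m) + (0 < i)).

Lemma path_alt_weightE (i : 'I_m) :
  \sum_(k < m | path_rel m i k) (if odd k then b else a) = path_alt_weight i.
Proof.
rewrite (path_nbr_sum i (fun k => if odd k then b else a)) /path_alt_weight.
case: i => [[|i] lt_im] /=; [case: (ltnP 1 m) | case: (ltnP i.+2 m); case: (odd i)] => /=; lia.
Qed.

Lemma path_alt_weight_mem (i : 'I_m) : 1 < m ->
  path_alt_weight i \in (if odd m then [:: b; a.*2; b.*2] else [:: a; b; a.*2; b.*2]).
Proof.
case: i => i /= lt_im lt_1m; rewrite /path_alt_weight.
case: (posnP i) => [->|_]; first by rewrite lt_1m; case: (odd m); rewrite !inE muln1 eqxx ?orbT.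
case: (ltnP i.+1 m) => [_|le_m_i1] /=.
  by case: (odd m); case: (odd i); rewrite !inE muln2 eqxx ?orbT.
have -> : m = i.+1 by lia.
by rewrite /=; case: (odd i); rewrite !inE muln1 eqxx ?orbT.
Qed.

Hypotheses (a_neq_b : a != b) (a_neq_2b : a != b.*2) (b_neq_2a : b != a.*2).

Lemma path_alt_weight_proper (i k : 'I_m) :
  path_rel m i k -> path_alt_weight i != path_alt_weight k.
Proof.
move: (ltn_ord i) (ltn_ord k); rewrite /path_rel /path_alt_weight.
move=> lt_im lt_km /orP[] /eqP Eik; rewrite -Eik /= in lt_km lt_im *.
  by case: (odd i) (posnP i) (ltnP i.+2 m) => [] [->|_] [_|_] /=; lia.
by case: (odd k) (posnP k) (ltnP k.+2 m) => [] [->|_] [_|_] /=; lia.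
Qed.

End AlternatingMasses.

Definition first_offset m j i :=
  if odd m then
    if j == 0 then (if odd i then m./2.+1 + i./2 else i./2)
    else (if odd i then m.-1 - i./2 else m./2 - i./2)
  else
    if j == 0 then i else (if odd i then m - i else m.-2 - i).

Definition snake_offset m j i := if odd j then m.-1 - i else i.

Definition layer_offset m j i := if j < 2 then first_offset m j i else snake_offset m j i.

Definition layer_label m j i := m * j + layer_offset m j i.

Lemma layer_offset_lt m j i : i < m -> layer_offset m j i < m.
Proof.
rewrite /layer_offset /first_offset /snake_offset.
case: (boolP (odd m)) => hm; case: (boolP (odd i)) => hi;
by case: (j < 2) (j == 0) (odd j) => [] [] []; lia.
Qed.

Lemma layer_offset_inj m j i i' : i < m -> i' < m ->
  layer_offset m j i = layer_offset m j i' -> i = i'.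
Proof.
rewrite /layer_offset /first_offset /snake_offset.
case: (boolP (odd m)) => hm; case: (boolP (odd i)) => hi; case: (boolP (odd i')) => hi';
by case: (j < 2) (j == 0) (odd j) => [] [] []; lia.
Qed.

Lemma layer_label_lt m n j i : i < m -> j < n -> layer_label m j i < m * n.
Proof. by move=> lt_im lt_jn; have := layer_offset_lt j lt_im; rewrite /layer_label; nia. Qed.

Lemma layer_label_inj m j j' i i' : i < m -> i' < m ->
  layer_label m j i = layer_label m j' i' -> j = j' /\ i = i'.
Proof.
move=> lt_im lt_i'm; rewrite /layer_label => E.
have m_gt0 : 0 < m := leq_ltn_trans (leq0n i) lt_im.
have j_eq : j = j'.
  have := congr1 (divn^~ m) E; rewrite ![m * _]mulnC !divnMDl //.
  by rewrite !divn_small ?addn0 ?layer_offset_lt.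
by subst j'; split=> //; apply: layer_offset_inj lt_im lt_i'm _; apply: addnI E.
Qed.

Lemma layer_label_lt_card m n (x : 'I_m * 'I_n) : layer_label m x.2 x.1 < #|{: 'I_m * 'I_n}|.
Proof. by rewrite card_prod !card_ord layer_label_lt. Qed.

Definition layer_labeling m n : {ffun 'I_m * 'I_n -> 'I_#|{: 'I_m * 'I_n}|} :=
  [ffun x => Ordinal (layer_label_lt_card x)].

Lemma layer_labeling_inj m n : injective (layer_labeling m n).
Proof.
move=> [i j] [i' j'] /(congr1 val); rewrite !ffunE /= => /layer_label_inj.
by case/(_ (ltn_ord i) (ltn_ord i')) => /val_inj-> /val_inj->.
Qed.

Definition column_mass m n i := \sum_(j < n) (layer_label m j i).+1.

Lemma snake_offset_sum m k i : i < m -> \sum_(0 <= j < k.*2) snake_offset m j i = k * m.-1.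
Proof.
move=> lt_im; elim: k => [|k IHk]; first by rewrite big_geq.
by rewrite doubleS !big_nat_recr //= IHk /snake_offset /= odd_double /=; lia.
Qed.

Lemma column_massE m n i : ~~ odd n -> 1 < n -> i < m ->
  column_mass m n i =
    \sum_(j < n) (m * j).+1 + (n./2).-1 * m.-1 + (first_offset m 0 i + first_offset m 1 i).
Proof.
move=> n_even n_gt1 lt_im; rewrite /column_mass /layer_label.
under eq_bigr do rewrite -addSn.
rewrite big_split /= -addnA; congr (_ + _).
rewrite -(big_mkord xpredT (fun j => layer_offset m j i)) (big_cat_nat (leq0n 2) n_gt1) /=.
rewrite addnC; congr (_ + _); last by rewrite !big_nat_recr //= big_geq.
rewrite -[2 in LHS]add0n big_addn.
have -> : n - 2 = (n./2).-1.*2 by lia.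
rewrite -(snake_offset_sum _ lt_im); apply: eq_bigr => j _.
by rewrite /layer_offset addn2 /snake_offset /= negbK.
Qed.

Lemma first_offset_pair_sum m i : i < m ->
  first_offset m 0 i + first_offset m 1 i =
    first_offset m 0 0 + first_offset m 1 0 + (if odd i then (if odd m then m else 2) else 0).
Proof.
rewrite /first_offset /=.
by case: (boolP (odd m)) => hm; case: (boolP (odd i)) => hi; lia.
Qed.

Section ColumnMass.
Variables (m n : nat).
Hypotheses (n_even : ~~ odd n) (n_gt1 : 1 < n).

Lemma column_mass_alt i : i < m ->
  column_mass m n i = column_mass m n 0 + (if odd i then (if odd m then m else 2) else 0).
Proof.
move=> lt_im; have m_gt0 : 0 < m := leq_ltn_trans (leq0n i) lt_im.
by rewrite !column_massE // first_offset_pair_sum // !addnA.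
Qed.

Lemma column_mass0_gt : 0 < m -> m.+1 < column_mass m n 0.
Proof.
move=> m_gt0; rewrite column_massE //.
rewrite -(big_mkord xpredT (fun j => (m * j).+1)) (big_cat_nat (leq0n 2) n_gt1) /=.
by rewrite !big_nat_recr //= big_geq // muln1; move: (_ * m.-1) => k; lia.
Qed.

End ColumnMass.

Theorem mainTheorem10 (n m : nat) :
  ~~ odd n -> 1 < n -> 3 <= m ->
  chi_ld (lexprod (path_rel m) (edgeless_rel n)) <= (if odd m then 3 else 4).
Proof.
move=> n_even n_gt1 m_ge3.
set G := lexprod _ _; set f := layer_labeling m n.
set a := column_mass m n 0; set b := a + (if odd m then m else 2).
have massE (k : 'I_m) : column_mass m n k = if odd k then b else a.
  by rewrite column_mass_alt //; case: (odd k); rewrite ?addn0.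
have weightE u : weight G f u = path_alt_weight m a b u.1.
  rewrite weight_lexprod_edgeless -path_alt_weightE; apply: eq_bigr => k _.
  by rewrite -massE; apply: eq_bigr => j _; rewrite ffunE.
have a_gt : m.+1 < a := column_mass0_gt n_even n_gt1 (ltnW (ltnW m_ge3)).
have [a_neq_b a_neq_2b b_neq_2a] : [/\ a != b, a != b.*2 & b != a.*2].
  by rewrite /b; case: (odd m); split; lia.
have f_lda : is_lda G f.
  apply/is_ldaP; split=> [|u v]; first exact: layer_labeling_inj.
  rewrite !weightE /G /lexprod /edgeless_rel andbF orbF; exact: path_alt_weight_proper.
have weight_mem u :
    weight G f u \in (if odd m then [:: b; a.*2; b.*2] else [:: a; b; a.*2; b.*2]).
  by rewrite weightE path_alt_weight_mem // ltnW.
apply: leq_trans (chi_ld_le_num_weights f_lda) _.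
by apply: leq_trans (num_weights_le_size weight_mem) _; case: (odd m).
Qed.
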